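(* Let $c_{gap}(\ell)$ denote the spectral gap of the heat-bath Glauber dynamics for proper $k$-colorings of the complete tree of height $\ell$ with branching factor $b$, whose root is additionally adjacent to an external vertex with a fixed color. Then for every $\ell>0$ and $k\le b+2$, $c_{gap}(\ell)\le c_{gap}(\ell-1)$.
   Context: Spectral gap $c_{gap}=\inf_f\mathcal D(f)/\mathrm{Var}(f)$ over non-constant $f$, with Dirichlet form $\mathcal D(f)=\frac12\sum_{\sigma,\sigma'}(f(\sigma)-f(\sigma'))^2\pi(\sigma)P(\sigma,\sigma')$ and $\mathrm{Var}$ the variance under the stationary distribution $\pi$ (uniform on proper colorings consistent with the fixed external color). The heat-bath Glauber dynamics chooses a uniformly random (non-external) vertex and recolors it uniformly among colors not used by its neighbors. The tree of height $0$ is a single vertex adjacent to the external vertex. *)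

From HB Require Import structures.
From mathcomp Require Import all_boot all_order all_algebra.
From mathcomp Require Import all_classical all_reals.
From mathcomp Require Import ereal.
Set Implicit Arguments. Unset Strict Implicit. Unset Printing Implicit Defensive.
Import Order.TTheory GRing.Theory Num.Theory.
Local Open Scope ring_scope.
Local Open Scope classical_set_scope.

(* Vertices of the complete tree of height l with branching factor b:
   words over 'I_b of length d <= l (the word is the path from the root). *)
Definition vtx (b l : nat) := {d : 'I_l.+1 & (d : nat).-tuple 'I_b}.

Section Glauber.
Variables (R : realType) (b k l : nat) (c : 'I_k).
(* c = the fixed colour of the external vertex adjacent to the root *)

Definition vseq (v : vtx b l) : seq 'I_b := val (tagged v).
Definition is_root (v : vtx b l) : bool := vseq v == [::].
Definition child (u v : vtx b l) : bool := [exists i : 'I_b, vseq v == rcons (vseq u) i].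
Definition adj (u v : vtx b l) : bool := child u v || child v u.

Definition coloring := {ffun vtx b l -> 'I_k}.

Definition proper (s : coloring) : bool :=
  [forall v, is_root v ==> (s v != c)] &&
  [forall u, forall v, adj u v ==> (s u != s v)].

Definition Omega : {set coloring} := [set s | proper s].

Definition allowed (s : coloring) (v : vtx b l) : {set 'I_k} :=
  [set a : 'I_k | (~~ is_root v || (a != c)) && [forall u, adj u v ==> (s u != a)]].

Definition upd (s : coloring) (v : vtx b l) (a : 'I_k) : coloring :=
  [ffun u => if u == v then a else s u].

Definition P (s s' : coloring) : R :=
  (#|{: vtx b l}|%:R)^-1 *
  \sum_(v : vtx b l) (#|allowed s v|%:R)^-1 *
     \sum_(a in allowed s v) ((s' == upd s v a)%:R : R).

Definition pi (s : coloring) : R := if s \in Omega then (#|Omega|%:R)^-1 else 0.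

Definition Dir (f : coloring -> R) : R :=
  2^-1 * \sum_(s in Omega) \sum_(s' in Omega) (f s - f s') ^+ 2 * pi s * P s s'.

Definition Mean (f : coloring -> R) : R := \sum_(s in Omega) pi s * f s.
Definition Var (f : coloring -> R) : R := \sum_(s in Omega) pi s * (f s - Mean f) ^+ 2.

Definition nonconst (f : coloring -> R) : Prop :=
  exists s, exists s', [/\ s \in Omega, s' \in Omega & f s != f s'].

(* spectral gap, as an extended real (+oo if there is no non-constant f) *)
Definition c_gap : \bar R :=
  ereal_inf [set ((Dir f / Var f)%:E) | f in [set f | nonconst f]].

End Glauber.

(* Compose a test function f on the colourings of the tree of height l-1 with
   the restriction map r to the tree of height l.  All fibres of r have the same
   size (transposing two colours on the leaves maps a fibre bijectively onto
   another), so r pushes the uniform measure forward to the uniform measure and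
   f \o r has the same variance as f.  Its Dirichlet form is not larger: a move
   at a leaf does not change f \o r, while a move at an inner vertex w sees a
   smaller set of allowed colours than the same move on the smaller tree.  When
   at least two colours are allowed, the heavier weight 1 / (|V_l| |A_l(w)|) of
   that move is compensated by |V_(l-1)| |A_(l-1)(w)| <= |V_l| |A_l(w)|; this is
   where k <= b + 2 is needed. *)
From Pilot Require Import Defs.
From mathcomp Require Import all_boot all_order all_algebra perm.
From mathcomp Require Import all_classical all_reals.
From mathcomp Require Import ereal.
From mathcomp Require Import zify.
Set Implicit Arguments. Unset Strict Implicit. Unset Printing Implicit Defensive.
Import Order.TTheory GRing.Theory Num.Theory.
Local Open Scope ring_scope.

Section Tree.
Variables b L : nat.

Definition vtx_of_seq (t : seq 'I_b) (Ht : (size t < L.+1)%N) : vtx b L :=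
  existT (fun d : 'I_L.+1 => (d : nat).-tuple 'I_b) (Ordinal Ht)
    (@Tuple (size t) _ t (eqxx _)).

Lemma vseq_inj : injective (@vseq b L).
Proof.
case=> [d t] [d' t']; rewrite /vseq /= => E.
have edd : d = d' by apply: val_inj; rewrite /= -(size_tuple t) -(size_tuple t') E.
by subst d'; congr existT; apply: val_inj.
Qed.

Lemma size_vseq (v : vtx b L) : (size (vseq v) <= L)%N.
Proof. by rewrite /vseq size_tuple -ltnS ltn_ord. Qed.

Lemma size_child (u v : vtx b L) : child u v -> size (vseq v) = (size (vseq u)).+1.
Proof. by case/existsP => i /eqP ->; rewrite size_rcons. Qed.

Lemma adj_irrefl (v : vtx b L) : ~~ adj v v.
Proof. by rewrite /adj orbb; apply/negP => /size_child /n_Sn. Qed.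

Lemma adj_sym (u v : vtx b L) : adj u v = adj v u.
Proof. by rewrite /adj orbC. Qed.

Lemma child_adj (u v : vtx b L) : child u v -> adj u v.
Proof. by rewrite /adj => ->. Qed.

Definition root_vtx : vtx b L := @vtx_of_seq [::] (ltn0Sn L).

End Tree.

Section Colourings.
Variables (b k L : nat) (c : 'I_k).
Implicit Types (s : coloring b k L) (u v : vtx b L).

Lemma OmegaI s : (forall u, is_root u -> s u != c) ->
  (forall u v, child u v -> s u != s v) -> s \in Omega b L c.
Proof.
move=> Hroot Hchild; rewrite inE; apply/andP; split.
  by apply/forallP => u; apply/implyP; apply: Hroot.
apply/forallP => u; apply/forallP => v; apply/implyP => /orP [/Hchild //|/Hchild].
by rewrite eq_sym.
Qed.

Lemma Omega_root s u : s \in Omega b L c -> is_root u -> s u != c.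
Proof. by rewrite inE => /andP [/forallP H _] ru; have := H u; rewrite ru. Qed.

Lemma Omega_adj s u v : s \in Omega b L c -> adj u v -> s u != s v.
Proof. by rewrite inE => /andP [_ /forallP H] a; have := forallP (H u) v; rewrite a. Qed.

Lemma upd_in_Omega s v a :
  s \in Omega b L c -> a \in allowed c s v -> upd s v a \in Omega b L c.
Proof.
rewrite !inE => /andP [/forallP Hr /forallP Ha] /andP [Hra /forallP Hna].
apply/andP; split.
  apply/forallP => u; apply/implyP => ru; rewrite /upd ffunE.
  case: ifP => [/eqP E|_]; last by have := Hr u; rewrite ru.
  by move: Hra; rewrite -E ru.
apply/forallP => u1; apply/forallP => u2; apply/implyP => a12; rewrite /upd !ffunE.
case: ifP => [/eqP e1|/negbT n1]; case: ifP => [/eqP e2|/negbT n2].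
- by move: a12; rewrite e1 e2 (negbTE (adj_irrefl _)).
- by rewrite eq_sym; have := Hna u2; rewrite adj_sym -e1 a12.
- by have := Hna u1; rewrite -e2 a12.
- by have := forallP (Ha u1) u2; rewrite a12.
Qed.

Lemma allowed_self s v : s \in Omega b L c -> s v \in allowed c s v.
Proof.
move=> Hs; rewrite inE; apply/andP; split.
  by case: (boolP (is_root v)) => //= /(Omega_root Hs).
by apply/forallP => u; apply/implyP => /(Omega_adj Hs).
Qed.

Lemma upd_self s v : upd s v (s v) = s.
Proof. by apply/ffunP => u; rewrite /upd ffunE; case: eqP => // ->. Qed.

(* A non-root vertex cannot take its parent's colour, the root not the external one. *)
Lemma card_allowed_lt s v : (#|allowed c s v| < k)%N.
Proof.
suff [a Ha] : exists a, a \notin allowed c s v.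
  have : allowed c s v \proper [set: 'I_k].
    by apply/properP; split; [apply: finset.subsetT | exists a].
  by move/proper_card; rewrite cardsT card_ord.
case: (boolP (is_root v)) => rv; first by exists c; rewrite inE rv eqxx.
have [t [x et]] : exists t x, vseq v = rcons t x.
  move: rv; rewrite /is_root; case: (vseq v) => [//|y t' _].
  by exists (belast y t'), (last y t'); rewrite -lastI.
have Ht : (size t < L.+1)%N.
  by move: (size_vseq v); rewrite et size_rcons => /ltnW.
exists (s (vtx_of_seq Ht)); rewrite inE negb_and negb_forall; apply/orP; right.
apply/existsP; exists (vtx_of_seq Ht); rewrite eqxx implybF negbK.
by apply: child_adj; apply/existsP; exists x; rewrite et.
Qed.

End Colourings.

Section Dirichlet.
Variables (R : realType) (b k L : nat) (c : 'I_k).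
Implicit Types (h : coloring b k L -> R) (s : coloring b k L).

Definition local_dir h s : R :=
  \sum_(s' in Omega b L c) (h s - h s') ^+ 2 * P R c s s'.

Lemma Dir_local h :
  Dir c h = 2^-1 * \sum_(s in Omega b L c) Defs.pi R c s * local_dir h s.
Proof.
congr (_ * _); apply: eq_bigr => s _; rewrite /local_dir mulr_sumr.
by apply: eq_bigr => s' _; rewrite mulrAC mulrC mulrA.
Qed.

Lemma local_dirE h s : s \in Omega b L c ->
  local_dir h s = (#|{: vtx b L}|%:R)^-1 * \sum_v (#|allowed c s v|%:R)^-1 *
     \sum_(a in allowed c s v) (h s - h (upd s v a)) ^+ 2.
Proof.
move=> Hs; rewrite /local_dir /P.
under eq_bigr do rewrite mulrCA big_distrr.
rewrite -mulr_sumr exchange_big /=; congr (_ * _); apply: eq_bigr => v _.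
under eq_bigr do rewrite mulrCA big_distrr.
rewrite -mulr_sumr exchange_big /=; congr (_ * _); apply: eq_bigr => a Ha.
rewrite (bigD1 (upd s v a)) ?upd_in_Omega //= eqxx mulr1 big1 ?addr0 //.
by move=> s' /andP [_ /negbTE ->]; rewrite mulr0.
Qed.

Lemma pi_ge0 s : 0 <= Defs.pi R c s.
Proof. by rewrite /Defs.pi; case: ifP => _ //; rewrite invr_ge0 ler0n. Qed.

Lemma sum_pi (F : coloring b k L -> R) :
  \sum_(s in Omega b L c) Defs.pi R c s * F s =
  (#|Omega b L c|%:R)^-1 * \sum_(s in Omega b L c) F s.
Proof. by rewrite mulr_sumr; apply: eq_bigr => s Hs; rewrite /Defs.pi Hs. Qed.

Lemma Var_ge0 h : 0 <= Var c h.
Proof. by apply: sumr_ge0 => s _; rewrite mulr_ge0 ?pi_ge0 ?sqr_ge0. Qed.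

End Dirichlet.

Section Levels.
Variables b m : nat.
Implicit Types (w : vtx b m) (v : vtx b m.+1).

Definition embed w : vtx b m.+1 := vtx_of_seq (leqW (size_vseq w) : (_ < m.+2)%N).

Lemma truncate_subproof (t : seq 'I_b) : (size (take m t) < m.+1)%N.
Proof. by rewrite ltnS size_take_min geq_minl. Qed.

Definition truncate v : vtx b m := vtx_of_seq (truncate_subproof (vseq v)).

Definition inner v : bool := (size (vseq v) <= m)%N.

Lemma vseq_embed w : vseq (embed w) = vseq w. Proof. by []. Qed.
Lemma vseq_truncate v : vseq (truncate v) = take m (vseq v). Proof. by []. Qed.
Lemma child_embed u w : child (embed u) (embed w) = child u w. Proof. by []. Qed.
Lemma adj_embed u w : adj (embed u) (embed w) = adj u w. Proof. by []. Qed.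
Lemma root_embed w : is_root (embed w) = is_root w. Proof. by []. Qed.

Lemma embed_inj : injective embed.
Proof. by move=> u w /(congr1 (@vseq b m.+1)) E; apply: vseq_inj. Qed.

Lemma truncate_embed w : truncate (embed w) = w.
Proof. by apply: vseq_inj; rewrite vseq_truncate vseq_embed take_oversize // size_vseq. Qed.

Lemma inner_embed w : inner (embed w).
Proof. exact: size_vseq. Qed.

Lemma embed_truncate v : inner v -> embed (truncate v) = v.
Proof. by move=> iv; apply: vseq_inj; rewrite vseq_embed vseq_truncate take_oversize. Qed.

Lemma inner_root v : is_root v -> inner v.
Proof. by rewrite /is_root /inner => /eqP ->. Qed.

Lemma root_truncate v : is_root v -> is_root (truncate v).
Proof. by rewrite /is_root vseq_truncate => /eqP ->. Qed.

Lemma size_outer v : ~~ inner v -> size (vseq v) = m.+1.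
Proof. by rewrite /inner -ltnNge => h; apply/eqP; rewrite eqn_leq h size_vseq. Qed.

Lemma child_truncate v : ~~ inner v -> child (embed (truncate v)) v.
Proof.
move/size_outer; case/lastP E: (vseq v) => [//|t x]; rewrite size_rcons => -[st].
by apply/existsP; exists x; rewrite vseq_embed vseq_truncate E -cats1 take_size_cat // cats1.
Qed.

Lemma childP (u v : vtx b m.+1) : child u v ->
  [/\ inner u, inner v & child (truncate u) (truncate v)] \/
  ~~ inner v /\ u = embed (truncate v).
Proof.
case/existsP => i /eqP e.
have iu : inner u by rewrite /inner -ltnS; move: (size_vseq v); rewrite e size_rcons.
have [iv|ov] := boolP (inner v); [left|right].
  by split=> //; apply/existsP; exists i; rewrite !vseq_truncate !take_oversize // e.
split=> //; apply: vseq_inj; rewrite vseq_embed vseq_truncate e -cats1 take_size_cat //.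
by move: (size_outer ov); rewrite e size_rcons => -[].
Qed.

Lemma card_vtx_leS : (#|{: vtx b m}| <= #|{: vtx b m.+1}|)%N.
Proof. exact: leq_card embed_inj. Qed.

Lemma card_vtx_mulS : (b * #|{: vtx b m}| <= #|{: vtx b m.+1}|)%N.
Proof.
have child_subproof (p : 'I_b * vtx b m) : (size (rcons (vseq p.2) p.1) < m.+2)%N.
  by rewrite size_rcons !ltnS size_vseq.
have : injective (fun p => vtx_of_seq (child_subproof p)).
  by move=> [i1 w1] [i2 w2] /(congr1 (@vseq b m.+1)) /rcons_inj [/vseq_inj -> ->].
by move/leq_card; rewrite card_prod card_ord.
Qed.

End Levels.

Lemma card_vtx_gt0 b L : (0 < #|{: vtx b L}|)%N.
Proof. by apply/card_gt0P; exists (root_vtx b L). Qed.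

Section Restriction.
Variables (b k m : nat) (c : 'I_k).
Implicit Types (s : coloring b k m.+1) (t : coloring b k m).

Definition restrict s : coloring b k m := [ffun w => s (embed w)].

Lemma restrictE s w : restrict s w = s (embed w). Proof. by rewrite ffunE. Qed.

Lemma restrict_in_Omega s : s \in Omega b m.+1 c -> restrict s \in Omega b m c.
Proof.
move=> Hs; apply: OmegaI => [u ru|u v cuv]; rewrite !restrictE.
  by apply: Omega_root Hs _; rewrite root_embed.
by apply: Omega_adj Hs _; apply: child_adj; rewrite child_embed.
Qed.

Lemma restrict_upd_embed s w a : restrict (upd s (embed w) a) = upd (restrict s) w a.
Proof. by apply/ffunP => u; rewrite /upd !ffunE (inj_eq (@embed_inj b m)). Qed.

Lemma restrict_upd_outer s v a : ~~ inner v -> restrict (upd s v a) = restrict s.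
Proof.
move=> ov; apply/ffunP => u; rewrite /upd !ffunE.
by case: eqP => // e; move: ov; rewrite -e inner_embed.
Qed.

Lemma allowed_embed_sub s w :
  allowed c s (embed w) \subset allowed c (restrict s) w.
Proof.
apply/fintype.subsetP => a; rewrite !inE root_embed => /andP [-> /forallP H] /=.
apply/forallP => u; apply/implyP => auw; rewrite restrictE.
by have := H (embed u); rewrite adj_embed auw.
Qed.

(* Away from the bottom level of the small tree, both vertices have the same neighbours. *)
Lemma allowed_embed_sup s w : (size (vseq w) < m)%N ->
  allowed c (restrict s) w \subset allowed c s (embed w).
Proof.
move=> sw; apply/fintype.subsetP => a; rewrite !inE root_embed => /andP [-> /forallP H] /=.
apply/forallP => u; apply/implyP => auw.
have iu : inner u by case/orP: (auw) => /size_child; rewrite vseq_embed /inner; lia.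
by have := H (truncate u); rewrite restrictE -adj_embed !embed_truncate // auw.
Qed.

Definition extend t (G : vtx b m.+1 -> 'I_k) : coloring b k m.+1 :=
  [ffun v => if inner v then t (truncate v) else G v].

Lemma restrict_extend t G : restrict (extend t G) = t.
Proof. by apply/ffunP => w; rewrite restrictE ffunE inner_embed truncate_embed. Qed.

Lemma extend_in_Omega t G : t \in Omega b m c ->
  (forall v, ~~ inner v -> G v != t (truncate v)) -> extend t G \in Omega b m.+1 c.
Proof.
move=> Ht HG; apply: OmegaI => [u ru|u v cuv]; rewrite !ffunE.
  by rewrite inner_root //; apply: Omega_root Ht _; apply: root_truncate.
case: (childP cuv) => [[iu iv cp]|[ov ->]].
  by rewrite iu iv; apply: Omega_adj Ht _; apply: child_adj.
by rewrite inner_embed truncate_embed (negbTE ov) eq_sym HG.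
Qed.

Definition fibre t : {set coloring b k m.+1} :=
  [set s in Omega b m.+1 c | restrict s == t].

Lemma leaf_neq_parent s v : s \in Omega b m.+1 c -> ~~ inner v ->
  s v != restrict s (truncate v).
Proof.
move=> Hs ov; rewrite restrictE eq_sym; apply: Omega_adj Hs _; apply: child_adj.
exact: child_truncate.
Qed.

(* Transposing the colours t1 and t2 of the parent of each leaf maps fibre t1 into fibre t2. *)
Lemma card_fibre_le t1 t2 : t2 \in Omega b m c -> (#|fibre t1| <= #|fibre t2|)%N.
Proof.
move=> H2.
pose T s := extend t2 (fun v => tperm (t1 (truncate v)) (t2 (truncate v)) (s v)).
rewrite -(card_in_imset (f := T) (D := mem (fibre t1))).
  apply: subset_leq_card; apply/fintype.subsetP => _ /imsetP [s + ->].
  rewrite inE => /andP [Hs /eqP rs]; rewrite inE restrict_extend eqxx andbT.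
  apply: extend_in_Omega => // v ov.
  by rewrite -{2}(tpermL (t1 (truncate v)) (t2 (truncate v))) (inj_eq perm_inj) -rs
    leaf_neq_parent.
move=> s1 s2; rewrite !inE => /andP [_ /eqP r1] /andP [_ /eqP r2] E.
apply/ffunP => v; have := congr1 (fun F : coloring b k m.+1 => F v) E; rewrite !ffunE.
have [iv _|_] := boolP (inner v); last exact: perm_inj.
by rewrite -(embed_truncate iv) -!restrictE r1 r2.
Qed.

Lemma card_fibre_eq t1 t2 : t1 \in Omega b m c -> t2 \in Omega b m c ->
  #|fibre t1| = #|fibre t2|.
Proof. by move=> H1 H2; apply/eqP; rewrite eqn_leq !card_fibre_le. Qed.

(* Colour every leaf with c, or with the root's colour when its parent uses c. *)
Lemma card_fibre_gt0 t : t \in Omega b m c -> (0 < #|fibre t|)%N.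
Proof.
move=> Ht; pose other (x : 'I_k) := if x == c then t (root_vtx b m) else c.
have Hother x : other x != x.
  rewrite /other; case: (eqVneq x c) => [->|xc]; last by rewrite eq_sym.
  exact: Omega_root Ht _.
apply/card_gt0P; exists (extend t (fun v => other (t (truncate v)))).
by rewrite inE restrict_extend eqxx extend_in_Omega.
Qed.

Lemma sum_restrict (R : realType) (F : coloring b k m -> R) :
  \sum_(s in Omega b m.+1 c) F (restrict s) =
  \sum_(t in Omega b m c) #|fibre t|%:R * F t.
Proof.
rewrite (partition_big restrict (mem (Omega b m c))) /=; last exact: restrict_in_Omega.
apply: eq_bigr => t _; rewrite -sumr_const mulr_suml.
rewrite (eq_bigl (fun s => s \in fibre t)) => [|s]; last by rewrite !inE.
by apply: eq_bigr => s; rewrite mul1r inE => /andP [_ /eqP ->].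
Qed.

(* Only a vertex w on the bottom level loses colours (those of its new children),
   and then |A_m(w)| < k <= b + 2 while |V_(m+1)| >= max(|V_m|, b |V_m|). *)
Lemma card_allowed_embed s w : (k <= b + 2)%N -> (1 < #|allowed c s (embed w)|)%N ->
  (#|{: vtx b m}| * #|allowed c (restrict s) w| <=
   #|{: vtx b m.+1}| * #|allowed c s (embed w)|)%N.
Proof.
move=> kb two_allowed; have [sw|_] := ltnP (size (vseq w)) m.
  by rewrite leq_mul ?card_vtx_leS ?subset_leq_card ?allowed_embed_sup.
have := card_allowed_lt c (restrict s) w; have := card_vtx_mulS b m.
have := card_vtx_leS b m; move: two_allowed kb.
set Vm := #|{: vtx b m}|; set Vl := #|{: vtx b m.+1}|.
set am := #|allowed _ _ w|; set al := #|allowed _ _ (embed w)|.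
by move=> *; nia.
Qed.

End Restriction.

Arguments restrict {b k m}.

Lemma ler_avg_subset (R : numFieldType) (T : finType) (A B : {set T}) (D : T -> R)
    (x y : nat) :
  A \subset B -> (forall a, 0 <= D a) -> (0 < x)%N -> (0 < #|A|)%N ->
  (x * #|B| <= y * #|A|)%N ->
  (y%:R)^-1 * ((#|A|%:R)^-1 * \sum_(a in A) D a) <=
  (x%:R)^-1 * ((#|B|%:R)^-1 * \sum_(a in B) D a).
Proof.
move=> AB D0 x0 A0 le_xy; have AB_card := subset_leq_card AB.
have xB0 : (0 < x * #|B|)%N by rewrite muln_gt0 x0 (leq_trans A0).
have yA0 : (0 < y * #|A|)%N := leq_trans xB0 le_xy.
rewrite !mulrA -!invfM -!natrM; apply: ler_pM.
- by rewrite invr_ge0 ler0n.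
- by apply: sumr_ge0 => a _.
- by rewrite lef_pV2 ?posrE ?ltr0n // ler_nat.
- rewrite [X in _ <= X](big_setID A) /= (finset.setIidPr AB) lerDl.
  by apply: sumr_ge0 => a _.
Qed.

Section Comparison.
Variables (R : realType) (b k m : nat) (c : 'I_k).
Implicit Types (f : coloring b k m -> R) (s : coloring b k m.+1).

Lemma vertex_energy_le f s w : (k <= b + 2)%N -> s \in Omega b m.+1 c ->
  (#|{: vtx b m.+1}|%:R)^-1 * ((#|allowed c s (embed w)|%:R)^-1 *
     \sum_(a in allowed c s (embed w))
        (f (restrict s) - f (restrict (upd s (embed w) a))) ^+ 2) <=
  (#|{: vtx b m}|%:R)^-1 * ((#|allowed c (restrict s) w|%:R)^-1 *
     \sum_(a in allowed c (restrict s) w)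
        (f (restrict s) - f (upd (restrict s) w a)) ^+ 2).
Proof.
move=> kb Hs; set Al := allowed c s (embed w).
under eq_bigr do rewrite restrict_upd_embed.
have [le1|gt1] := leqP #|Al| 1.
  rewrite big1 ?mulr0 => [|a Ha].
    by rewrite !mulr_ge0 ?invr_ge0 ?ler0n //; apply: sumr_ge0 => a _; apply: sqr_ge0.
  have -> : a = s (embed w) by apply: (card_le1_eqP le1) => //; apply: allowed_self.
  by rewrite -restrictE upd_self subrr expr0n.
apply: ler_avg_subset; rewrite ?card_vtx_gt0 ?allowed_embed_sub //.
- by move=> a; apply: sqr_ge0.
- exact: ltnW.
- exact: card_allowed_embed.
Qed.

Lemma local_dir_restrict_le f s : (k <= b + 2)%N -> s \in Omega b m.+1 c ->
  local_dir c (f \o restrict) s <= local_dir c f (restrict s).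
Proof.
move=> kb Hs; rewrite (local_dirE _ Hs) (local_dirE _ (restrict_in_Omega Hs)) /=.
rewrite (bigID (@inner b m)) /= [X in _ * (_ + X)]big1 ?addr0 => [|v ov]; last first.
  by rewrite big1 ?mulr0 // => a _; rewrite restrict_upd_outer // subrr expr0n.
rewrite (reindex_onto (@embed b m) (@truncate b m)) /= => [|v]; last exact: embed_truncate.
rewrite (eq_bigl xpredT) => [|w]; last by rewrite inner_embed truncate_embed eqxx.
by rewrite !mulr_sumr; apply: ler_sum => w _; apply: vertex_energy_le.
Qed.

Lemma sum_pi_restrict (F : coloring b k m -> R) :
  \sum_(s in Omega b m.+1 c) Defs.pi R c s * F (restrict s) =
  \sum_(t in Omega b m c) Defs.pi R c t * F t.
Proof.
rewrite !sum_pi sum_restrict.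
have [->|[t0 H0]] := set_0Vmem (Omega b m c); first by rewrite !big_set0 !mulr0.
have fibreE G : \sum_(t in Omega b m c) #|fibre c t|%:R * G t =
                #|fibre c t0|%:R * \sum_(t in Omega b m c) G t :> R.
  by rewrite mulr_sumr; apply: eq_bigr => t Ht; rewrite (card_fibre_eq Ht H0).
have cardE : #|Omega b m.+1 c|%:R = #|fibre c t0|%:R * #|Omega b m c|%:R :> R.
  by have := @sum_restrict b k m c R (fun=> 1); rewrite fibreE !sumr_const.
rewrite fibreE cardE invfM mulrA [_ * _%:R]mulrAC mulVf ?mul1r //.
by rewrite pnatr_eq0 -lt0n card_fibre_gt0.
Qed.

Lemma Mean_restrict f : Mean c (f \o restrict) = Mean c f.
Proof. exact: sum_pi_restrict. Qed.

Lemma Var_restrict f : Var c (f \o restrict) = Var c f.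
Proof.
rewrite /Var Mean_restrict.
exact: (sum_pi_restrict (fun t => (f t - Mean c f) ^+ 2)).
Qed.

Lemma Dir_restrict_le f : (k <= b + 2)%N -> Dir c (f \o restrict) <= Dir c f.
Proof.
move=> kb; rewrite !Dir_local ler_wpM2l ?invr_ge0 //.
rewrite -(sum_pi_restrict (local_dir c f)); apply: ler_sum => s Hs.
by rewrite ler_wpM2l ?pi_ge0 ?local_dir_restrict_le.
Qed.

End Comparison.

Theorem lemma15 (R : realType) (b k l : nat) (c : 'I_k) :
  (0 < l)%N -> (k <= b + 2)%N ->
  (c_gap R b l c <= c_gap R b l.-1 c)%E.
Proof.
case: l => [//|m] _ kb /=; apply/ereal_infP => _ [f [t1 [t2 [H1 H2 f12]]] <-].
apply: ge_ereal_inf; exists ((Dir c (f \o restrict) / Var c (f \o restrict))%:E).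
  exists (f \o restrict) => //.
  have /card_gt0P [s1] := card_fibre_gt0 H1; have /card_gt0P [s2] := card_fibre_gt0 H2.
  move=> /setIdP [Hs2 /eqP r2] /setIdP [Hs1 /eqP r1].
  by exists s1, s2; split => //=; rewrite r1 r2.
rewrite lee_fin Var_restrict ler_wpM2r ?invr_ge0 ?Var_ge0 //.
exact: Dir_restrict_le.
Qed.
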